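(* For every $k\ge1$, $\langle B_k\rangle=\langle C_k\rangle$. (Moreover $|B_k|=|C_k|=2^k-k-1$ and the sets of $B_k$, viewed as characteristic vectors in $\mathbb{Z}_2^{2^k}$, are linearly independent, so $C_k$ is also a basis of this subspace.)
   Context: For subsets $x,y$ of $[n]=\{1,\dots,n\}$, $x\oplus y$ is the symmetric difference. For a family $X$ of subsets of $[n]$, its span $\langle X\rangle$ is the set of all symmetric differences $x_1\oplus\cdots\oplus x_t$ of finitely many members of $X$ (including the empty set for $t=0$). For a set $x$ of integers and integer $t\ge1$, $t\cdot x:=\{ti:i\in x\}$, applied elementwise to families. Define $B_1:=\emptyset$ and for $k\ge2$, $B_k:=B_{k-1}\cup\{\{i,2^{k-1}+i\}: 1\le i\le 2^{k-1}-1\}$. Define $O_1:=C_1:=\emptyset$ and for $k\ge2$: $O_k:=\{\{2i-1,2i+1\}:1\le i\le 2^{k-1}-1\}$ and $C_k:=O_k\cup 2\cdot C_{k-1}$. *)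

From HB Require Import structures.
From mathcomp Require Import all_boot all_order all_algebra all_field.
From mathcomp Require Import finmap.

Set Implicit Arguments.
Unset Strict Implicit.
Unset Printing Implicit Defensive.

Import GRing.Theory.
Local Open Scope fset_scope.

(* Subsets of [n] are finite sets of positive naturals. *)
Definition fsym (x y : {fset nat}) : {fset nat} := (x `\` y) `|` (y `\` x).

Definition symspan (X : {fset {fset nat}}) (x : {fset nat}) : Prop :=
  exists s : seq {fset nat}, {subset s <= X} /\ x = foldr fsym fset0 s.

Definition smul (t : nat) (x : {fset nat}) : {fset nat} := [fset t * i | i in x].
Definition fsmul (t : nat) (X : {fset {fset nat}}) : {fset {fset nat}} :=
  [fset smul t x | x in X].

(* B_1 = empty; B_{k} = B_{k-1} u {{i, 2^{k-1}+i} : 1 <= i <= 2^{k-1}-1}.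
   (B 0 is an arbitrary convention, equal to the empty family.) *)
Fixpoint B (k : nat) : {fset {fset nat}} :=
  match k with
  | 0 | 1 => fset0
  | k'.+1 => B k' `|` [fset [fset i; (2 ^ k' + i)%N] | i : nat in iota 1 (2 ^ k' - 1)]
  end.

Definition O (k : nat) : {fset {fset nat}} :=
  [fset [fset ((2 * i).-1)%N; ((2 * i).+1)%N] | i : nat in iota 1 (2 ^ k.-1 - 1)].

Fixpoint C (k : nat) : {fset {fset nat}} :=
  match k with
  | 0 | 1 => fset0
  | k'.+1 => O k `|` fsmul 2 (C k')
  end.

(* Characteristic vector in Z_2^{2^k}; coordinate j : 'I_(2^k) stands for element j+1 of [2^k]. *)
Definition chi (k : nat) (x : {fset nat}) : 'rV['F_2]_(2 ^ k) :=
  \row_(j < 2 ^ k) (if j.+1 \in x then 1%R else 0%R).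

From Pilot Require Import Defs.
From HB Require Import structures.
From mathcomp Require Import all_boot all_order all_algebra all_field.
From mathcomp Require Import finmap zify.

(** Both spans equal the space of subsets of {1, ..., 2^k - 1} that meet every
    2-adic valuation class in an even number of elements.  Each pair of [B k] or
    [C k] consists of two distinct elements of equal valuation, and the space is
    closed under symmetric difference.  Conversely, a set in the space is reduced
    to the empty set by [B k] by cancelling its largest element n = 2^j + i with
    the pair {i, n}: n is not a power of two, since a power of two has no smaller
    element of the same valuation.  For [C k] one cancels the largest odd element
    2i+1 with {2i-1, 2i+1}; once only even elements remain the set is 2y with y
    in the space for k - 1, which lies in the span of 2 C_(k-1) by induction.
    Distinct members of [B k] have distinct maxima, so their characteristic
    vectors are triangular, hence independent. *)

Set Implicit Arguments.
Unset Strict Implicit.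
Unset Printing Implicit Defensive.

Import GRing.Theory.
Local Open Scope fset_scope.
Local Notation fsym := Defs.fsym.

Lemma cardfsU_disjoint (K : choiceType) (X Y : {fset K}) :
  [disjoint X & Y] -> #|` X `|` Y| = (#|` X| + #|` Y|)%N.
Proof. by move=> /disjoint_fsetI0 XY; rewrite cardfsU XY cardfs0 subn0. Qed.

Lemma in_fsym (x y : {fset nat}) z : (z \in fsym x y) = (z \in x) (+) (z \in y).
Proof. by rewrite !inE; case: (z \in x); case: (z \in y). Qed.

Lemma fsymC : commutative fsym.
Proof. by move=> x y; apply/fsetP => z; rewrite !in_fsym addbC. Qed.

Lemma fsymK (y : {fset nat}) : involutive (fsym^~ y).
Proof. by move=> x; apply/fsetP => z; rewrite !in_fsym -addbA addbb addbF. Qed.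

Lemma odd_card_fsym (x y : {fset nat}) :
  odd #|` fsym x y| = odd #|` x| (+) odd #|` y|.
Proof.
have disj : [disjoint x `\` y & y `\` x].
  by apply/fdisjointP => z; rewrite !inE; case: (z \in x); case: (z \in y).
rewrite /Defs.fsym cardfsU_disjoint // !cardfsD fsetIC.
rewrite oddD !oddB ?fsubset_leq_card ?fsubsetIl ?fsubsetIr //.
by case: (odd _); case: (odd _); case: (odd _).
Qed.

Section Span.
Implicit Types (X Y : {fset {fset nat}}) (x y : {fset nat}).

Lemma symspan0 X : symspan X fset0.
Proof. by exists [::]. Qed.

Lemma symspan_fsym X x y : symspan X x -> y \in X -> symspan X (fsym x y).
Proof.
case=> s [sX ->] yX; exists (y :: s); split; last by rewrite /= fsymC.
by move=> z; rewrite inE => /predU1P [->|/sX].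
Qed.

Lemma symspan_sub X Y x : {subset X <= Y} -> symspan X x -> symspan Y x.
Proof. by move=> XY [s [sX ->]]; exists s; split => // z /sX /XY. Qed.

Lemma symspan_ind (P : {fset nat} -> Prop) X x :
  P fset0 -> (forall x y, P x -> P y -> P (fsym x y)) ->
  {in X, forall y, P y} -> symspan X x -> P x.
Proof.
move=> P0 Pfsym XP [s [sX ->]]; elim: s sX => [|y s IHs] sX //=.
by apply: Pfsym; [apply/XP/sX/mem_head | apply: IHs => z zs; apply/sX/mem_behead].
Qed.

Lemma symspan_map (f : {fset nat} -> {fset nat}) X x :
  f fset0 = fset0 -> {morph f : a b / fsym a b} ->
  symspan X x -> symspan [fset f y | y in X] (f x).
Proof.
move=> f0 fM [s [sX ->]]; exists (map f s); split.
  by move=> _ /mapP [y ys ->]; apply/imfsetP; exists y => //; apply: sX.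
by elim: s {sX} => //= y s <-; rewrite fM.
Qed.

End Span.

Lemma even_double_half m : ~~ odd m -> 2 * m./2 = m.
Proof. by move=> /even_halfK; rewrite mul2n. Qed.

Lemma logn2_double m : 0 < m -> logn 2 (2 * m) = (logn 2 m).+1.
Proof. by move=> m_gt0; rewrite lognM // logn_prime. Qed.

Lemma logn2_odd m : odd m -> logn 2 m = 0.
Proof. by move=> om; rewrite logn_coprime // coprime2n. Qed.

Lemma logn2_eq0 m : 0 < m -> (logn 2 m == 0) = odd m.
Proof.
move=> m_gt0; apply/eqP/idP => [|/logn2_odd //].
apply: contra_eqT => em; rewrite -(even_double_half em) logn2_double //.
by rewrite -(even_double_half em) muln_gt0 in m_gt0.
Qed.

Lemma expn_logn2_leq m : 0 < m -> 2 ^ logn 2 m <= m.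
Proof. by move=> m_gt0; apply: dvdn_leq m_gt0 (pfactor_dvdnn 2 m). Qed.

Lemma logn2_expD j i : 0 < i < 2 ^ j -> logn 2 (2 ^ j + i) = logn 2 i.
Proof.
elim: j i => [|j IHj] i i_bd; first by lia.
have [oi|ei] := boolP (odd i).
  have oD : odd (2 ^ j.+1 + i) by rewrite oddD oi expnS oddM.
  by rewrite !logn2_odd.
have i2_bd : 0 < i./2 < 2 ^ j.
  by move: i_bd; rewrite -{1 2}(even_double_half ei) expnS; lia.
rewrite -(even_double_half ei) expnS -mulnDr !logn2_double ?IHj //; lia.
Qed.

Definition vclass (j : nat) (x : {fset nat}) : {fset nat} :=
  [fset m in x | logn 2 m == j].

Lemma in_vclass j x m : (m \in vclass j x) = (m \in x) && (logn 2 m == j).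
Proof. by rewrite !inE. Qed.

Lemma vclass_fsym j x y : vclass j (fsym x y) = fsym (vclass j x) (vclass j y).
Proof.
apply/fsetP => z; rewrite !(in_vclass, in_fsym).
by case: (z \in x); case: (z \in y); case: (logn 2 z == j).
Qed.

Definition vclass_even (k : nat) (x : {fset nat}) : Prop :=
  (forall m, m \in x -> 0 < m < 2 ^ k) /\ (forall j, ~~ odd #|` vclass j x|).

Lemma vclass_even0 k : vclass_even k fset0.
Proof.
split=> [m|j]; first by rewrite inE.
by rewrite (_ : vclass j fset0 = fset0) ?cardfs0 //; apply/fsetP => z; rewrite !inE.
Qed.

Lemma vclass_even_fsym k x y :
  vclass_even k x -> vclass_even k y -> vclass_even k (fsym x y).
Proof.
move=> [x_bd x_even] [y_bd y_even]; split=> [m|j].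
  by rewrite in_fsym; case mx: (m \in x) => /=; [move=> _; apply: x_bd | move/y_bd].
by rewrite vclass_fsym odd_card_fsym (negbTE (x_even j)) (negbTE (y_even j)).
Qed.

Lemma symspan_vclass_even k X x :
  {in X, forall y, vclass_even k y} -> symspan X x -> vclass_even k x.
Proof. by apply: symspan_ind; [apply: vclass_even0 | apply: vclass_even_fsym]. Qed.

Lemma vclass_pair j a b : logn 2 a = logn 2 b ->
  vclass j [fset a; b] = if logn 2 a == j then [fset a; b] else fset0.
Proof.
move=> ab_log; case: ifP => aj; apply/fsetP => z; rewrite in_vclass.
  by apply/andb_idr; rewrite !inE => /orP [] /eqP ->; rewrite -?ab_log aj.
by rewrite !inE; apply/andP => -[/orP [] /eqP ->]; rewrite -?ab_log aj.
Qed.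

Lemma vclass_even_pair k a b : a != b -> logn 2 a = logn 2 b ->
  0 < a < 2 ^ k -> 0 < b < 2 ^ k -> vclass_even k [fset a; b].
Proof.
move=> ab ab_log a_bd b_bd; split=> [m|j]; first by rewrite in_fset2 => /orP [] /eqP ->.
by rewrite vclass_pair //; case: ifP; rewrite ?cardfs2 ?ab ?cardfs0.
Qed.

Lemma vclass_even_partner k x n : vclass_even k x -> n \in x ->
  exists2 m, m \in x & (m != n) && (logn 2 m == logn 2 n).
Proof.
move=> [_ x_even] nx.
have [/hasP [m mx partner]|no_partner] :=
  boolP (has (fun m => (m != n) && (logn 2 m == logn 2 n)) x); first by exists m.
suff vclass_n : vclass (logn 2 n) x = [fset n].
  by have := x_even (logn 2 n); rewrite vclass_n cardfs1.
apply/fsetP => z; rewrite in_vclass in_fset1.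
have [->|zn] := eqVneq z n; first by rewrite nx eqxx.
by apply: contraNF no_partner => /andP [zx zl]; apply/hasP; exists z; rewrite ?zn.
Qed.

Definition fmax (x : {fset nat}) : nat := \max_(m <- x) m.

Lemma fmax_ub x m : m \in x -> m <= fmax x.
Proof. by move=> mx; apply: (@leq_bigmax_seq _ _ predT id). Qed.

Lemma fmax_pair a b : a <= b -> fmax [fset a; b] = b.
Proof.
move=> ab; apply/eqP; rewrite eqn_leq fmax_ub ?inE ?eqxx ?orbT // andbT.
by apply/bigmax_leqP_seq => m; rewrite !inE => /orP [] /eqP ->.
Qed.

Section Descent.

Variables (X : {fset {fset nat}}) (P : {fset nat} -> Prop) (Q : pred nat).
Hypothesis P_fsym : forall x y, P x -> P y -> P (fsym x y).
Hypothesis X_P : {in X, forall y, P y}.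
Hypothesis symspan_noQ : forall x, P x -> {in x, forall m, ~~ Q m} -> symspan X x.
Hypothesis cancel_topQ : forall x n, P x -> n \in x -> Q n ->
  {in x, forall m, Q m -> m <= n} ->
  exists2 y, y \in X & {in fsym x y, forall m, Q m -> m < n}.

Lemma symspan_descent x : P x -> symspan X x.
Proof.
suff: forall n x, P x -> {in x, forall m, Q m -> m < n} -> symspan X x.
  by move=> span_lt Px; apply: (span_lt (fmax x).+1) => // m /fmax_ub.
elim=> [|n IHn] {}x Px x_lt.
  by apply: symspan_noQ => // m /x_lt; case: (Q m) => // /(_ isT).
have [/andP [nx Qn]|not_top] := boolP ((n \in x) && Q n).
  have [y yX xy_lt] : exists2 y, y \in X & {in fsym x y, forall m, Q m -> m < n}.
    by apply: cancel_topQ => // m /x_lt m_lt /m_lt.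
  rewrite -[x](fsymK y); apply: (symspan_fsym _ yX).
  exact: IHn (P_fsym Px (X_P yX)) xy_lt.
apply: IHn => // m mx Qm; have := x_lt m mx Qm; rewrite ltnS leq_eqVlt.
by case: eqVneq => [mn|//]; move: not_top; rewrite -mn mx Qm.
Qed.

End Descent.

Definition Bnew (k : nat) : {fset {fset nat}} :=
  [fset [fset i; (2 ^ k + i)%N] | i : nat in iota 1 (2 ^ k - 1)].

Lemma B_succ k : B k.+1 = B k `|` Bnew k.
Proof.
case: k => [|k] //=; apply/fsetP => x; rewrite in_fsetU in_fset0 /=.
by apply/esym/imfsetP => -[i].
Qed.

Lemma mem_B k x :
  x \in B k <-> exists j i, j < k /\ 0 < i < 2 ^ j /\ x = [fset i; (2 ^ j + i)%N].
Proof.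
elim: k x => [|k IHk] x; first by split=> [|[j [i [//]]]].
have k_pos : 0 < 2 ^ k by rewrite expn_gt0.
rewrite B_succ in_fsetU; split.
  case/orP => [/IHk [j [i [jk [i_bd ->]]]]|/imfsetP [i /= i_in ->]].
    by exists j, i; rewrite ltnS ltnW.
  by exists k, i; split => //; split => //; move: i_in; rewrite mem_iota; lia.
move=> [j [i [jk [i_bd ->]]]]; apply/orP.
have [jk'|jk'] := ltnP j k; first by left; apply/IHk; exists j, i.
have jk_eq : j = k by lia.
subst j.
by right; apply/imfsetP; exists i => //=; rewrite mem_iota; lia.
Qed.

Lemma B_vclass_even k y : y \in B k -> vclass_even k y.
Proof.
move=> /mem_B [j [i [jk [i_bd ->]]]].
have : 2 ^ j.+1 <= 2 ^ k by rewrite leq_exp2l.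
rewrite expnS => jk2.
by apply: vclass_even_pair; rewrite ?logn2_expD //; first (apply/eqP); lia.
Qed.

Lemma vclass_even_symspan_B k x : vclass_even k x -> symspan (B k) x.
Proof.
apply: (symspan_descent (Q := predT)) => [||{}x _ x_empty|{}x n x_vc nx _ n_max].
- exact: vclass_even_fsym.
- exact: B_vclass_even.
- rewrite (_ : x = fset0); first exact: symspan0.
  by apply/fsetP => m; rewrite inE; apply/negbTE/negP => /x_empty.
have [m mx /andP [mn /eqP mn_log]] := vclass_even_partner x_vc nx.
have [x_bd _] := x_vc.
have /andP [m_pos _] := x_bd m mx; have /andP [n_pos n_lt] := x_bd n nx.
have m_lt : m < n by rewrite ltn_neqAle mn n_max.
pose j := trunc_log 2 n.
have n_ge : 2 ^ j <= n by apply: trunc_logP.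
have n_lt2 : n < 2 * 2 ^ j by rewrite -expnS; apply: trunc_log_ltn.
(* elements of valuation j are at least 2^j, so 2^j has no smaller partner *)
have n_ne : n != 2 ^ j.
  apply: contraTneq m_lt => n_eq; rewrite -leqNgt n_eq.
  by rewrite -{1}(pfactorK j (isT : prime 2)) -n_eq -mn_log expn_logn2_leq.
exists [fset n - 2 ^ j; n].
  apply/mem_B; exists j, (n - 2 ^ j); rewrite subnKC //.
  split; last by split => //; lia.
  by rewrite -(ltn_exp2l _ _ (isT : 1 < 2)); apply: leq_ltn_trans n_ge n_lt.
move=> m'; rewrite in_fsym in_fset2.
have [->|m'n] := eqVneq m' n; first by rewrite nx orbT.
have [->|_] := eqVneq m' (n - 2 ^ j); first by lia.
by rewrite orbF addbF => /n_max /(_ isT) m'_le _; rewrite ltn_neqAle m'n.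
Qed.

Section Dilation.
Variable t : nat.
Hypothesis t_pos : 0 < t.

Lemma in_smul x z : (z \in smul t x) = (t %| z) && (z %/ t \in x).
Proof.
apply/imfsetP/andP => [[i ix ->]|[tz zx]]; first by rewrite dvdn_mulr // mulKn.
by exists (z %/ t) => //; rewrite mulnC divnK.
Qed.

Lemma smul_fsym : {morph smul t : x y / fsym x y}.
Proof. by move=> x y; apply/fsetP => z; rewrite !(in_smul, in_fsym); case: (t %| z). Qed.

Lemma smul0 : smul t fset0 = fset0.
Proof. by apply/fsetP => z; rewrite in_smul inE andbF. Qed.

Lemma smul_inj : injective (smul t).
Proof.
move=> x y xy; apply/fsetP => z.
by have := in_smul x (t * z); rewrite xy in_smul dvdn_mulr // mulKn.
Qed.

Lemma card_smul x : #|` smul t x| = #|` x|.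
Proof. by rewrite card_in_imfset // => a b _ _ /eqP; rewrite eqn_mul2l gtn_eqF // => /eqP. Qed.

Lemma smul_div x : {in x, forall m, t %| m} -> smul t [fset m %/ t | m in x] = x.
Proof.
move=> x_dvd; apply/fsetP => z; rewrite in_smul; apply/andP/idP => [[tz /imfsetP [m mx /= zm]]|zx].
  by rewrite -(divnK tz) zm divnK ?x_dvd.
by split; [apply: x_dvd | apply/imfsetP; exists z].
Qed.

End Dilation.

Lemma vclass_smul2 j x : {in x, forall m, 0 < m} ->
  vclass j.+1 (smul 2 x) = smul 2 (vclass j x).
Proof.
move=> x_pos; apply/fsetP => z; rewrite !(in_vclass, in_smul) //.
have [/divnK zE|] := boolP (2 %| z) => //=; case: (boolP (z %/ 2 \in x)) => //= zx.
by rewrite -{1}zE mulnC logn2_double ?x_pos.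
Qed.

Lemma vclass_even_smul2 k x : vclass_even k.+1 (smul 2 x) <-> vclass_even k x.
Proof.
split=> [[x2_bd x2_even] | [x_bd x_even]].
  have x_bd' m : m \in x -> 0 < m < 2 ^ k.
    move=> mx; have: 2 * m \in smul 2 x by rewrite in_smul // dvdn_mulr // mulKn.
    by move/x2_bd; rewrite expnS; lia.
  split=> // j; have := x2_even j.+1.
  by rewrite vclass_smul2 ?card_smul // => m /x_bd' /andP [].
have x_pos m : m \in x -> 0 < m by move/x_bd => /andP [].
split=> [z|[|j]]; last by rewrite vclass_smul2 ?card_smul.
  rewrite in_smul // => /andP [/divnK zE /x_bd].
  by rewrite -zE expnS; lia.
rewrite (_ : vclass 0 _ = fset0) ?cardfs0 //; apply/fsetP => z.
rewrite in_vclass in_smul // inE; case: (boolP (2 %| z)) => //= /divnK zE.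
by apply/andP => -[/x_pos z_pos]; rewrite -zE mulnC logn2_double.
Qed.

Lemma C_succ k : C k.+1 = O k.+1 `|` fsmul 2 (C k).
Proof.
case: k => [|k] //=; apply/fsetP => x; rewrite in_fsetU in_fset0 /=.
by apply/esym/orP => -[/imfsetP [i] //|/imfsetP [i]].
Qed.

Lemma mem_O k x :
  x \in O k.+1 <-> exists2 i, 0 < i < 2 ^ k & x = [fset (2 * i).-1; (2 * i).+1].
Proof.
have k_pos : 0 < 2 ^ k by rewrite expn_gt0.
split=> [/imfsetP [i /= i_in ->]|[i i_bd ->]]; last first.
  by apply/imfsetP; exists i => //=; rewrite mem_iota; lia.
by exists i => //; move: i_in; rewrite mem_iota; lia.
Qed.

Lemma C_vclass_even k y : y \in C k -> vclass_even k y.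
Proof.
elim: k y => [|k IHk] y; first by rewrite inE.
rewrite C_succ in_fsetU => /orP [/mem_O [i i_bd ->]|/imfsetP [w /= /IHk w_even ->]].
  by apply: vclass_even_pair; rewrite ?logn2_odd ?expnS //=; lia.
by apply/vclass_even_smul2.
Qed.

Lemma vclass_even_symspan_C k x : vclass_even k x -> symspan (C k) x.
Proof.
elim: k x => [|k IHk] x.
  move=> [x_bd _]; rewrite (_ : x = fset0); first exact: symspan0.
  by apply/fsetP => m; rewrite inE; apply/negbTE/negP => /x_bd; lia.
apply: (symspan_descent (Q := odd)) => [||{}x x_vc x_no_odd|{}x n x_vc nx n_odd n_max].
- exact: vclass_even_fsym.
- exact: C_vclass_even.
- have x_dvd : {in x, forall m, 2 %| m} by move=> m /x_no_odd; rewrite dvdn2.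
  rewrite -(smul_div (isT : 0 < 2) x_dvd); apply: (@symspan_sub (fsmul 2 (C k))).
    by move=> y; rewrite C_succ in_fsetU orbC => ->.
  apply: symspan_map; [exact: smul0 | exact: smul_fsym | apply: IHk].
  by apply/vclass_even_smul2; rewrite smul_div.
have [m mx /andP [mn /eqP mn_log]] := vclass_even_partner x_vc nx.
have [x_bd _] := x_vc.
have /andP [m_pos _] := x_bd m mx; have /andP [n_pos n_lt] := x_bd n nx.
have m_odd : odd m by rewrite -logn2_eq0 // mn_log logn2_odd.
have m_lt : m < n by rewrite ltn_neqAle mn n_max.
have nE : n = (2 * n./2).+1 by rewrite -{1}(odd_double_half n) n_odd mul2n.
exists [fset (2 * n./2).-1; n].
  rewrite C_succ in_fsetU; apply/orP; left; apply/mem_O; exists n./2; last by rewrite -nE.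
  by move: n_lt; rewrite expnS; lia.
move=> m'; rewrite in_fsym in_fset2.
have [->|m'n] := eqVneq m' n; first by rewrite nx orbT.
have [->|_] := eqVneq m' (2 * n./2).-1; first by lia.
by rewrite orbF addbF => /n_max m'_le /m'_le; rewrite ltn_neqAle m'n.
Qed.

Lemma card_imfset_iota (K : choiceType) (f : nat -> K) a n :
  {in iota a n &, injective f} -> #|` [fset f i | i : nat in iota a n]| = n.
Proof. by move=> f_inj; rewrite card_in_imfset //= undup_id ?iota_uniq // size_iota. Qed.

Lemma card_B k : #|` B k| = 2 ^ k - k - 1.
Proof.
elim: k => [|k IHk] //; have k_lt := ltn_expl k (isT : 1 < 2).
have disj : [disjoint B k & Bnew k].
  apply/fdisjointP => x /B_vclass_even [x_bd _]; apply/negP => /imfsetP [i /= _ xE].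
  by have := x_bd (2 ^ k + i)%N; rewrite xE !inE eqxx orbT => /(_ isT); lia.
rewrite B_succ cardfsU_disjoint // IHk card_imfset_iota ?expnS; first by lia.
move=> a b _ _ /(congr1 fmax); rewrite !fmax_pair ?leq_addl //; lia.
Qed.

Lemma card_C k : #|` C k| = 2 ^ k - k - 1.
Proof.
elim: k => [|k IHk] //; have k_lt := ltn_expl k (isT : 1 < 2).
have disj : [disjoint O k.+1 & fsmul 2 (C k)].
  apply/fdisjointP => x /mem_O [i _ ->]; apply/negP => /imfsetP [y /= _ xE].
  have : (2 * i).+1 \in smul 2 y by rewrite -xE !inE eqxx orbT.
  by rewrite in_smul // dvdn2 /= mul2n odd_double.
have card_fsmul : #|` fsmul 2 (C k)| = #|` C k|.
  by rewrite card_imfset //; apply: smul_inj.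
rewrite C_succ cardfsU_disjoint // card_fsmul IHk /O card_imfset_iota ?expnS /=; first by lia.
by move=> a b _ _ /(congr1 fmax); rewrite !fmax_pair; lia.
Qed.

Lemma chi_notin_span k (s : seq {fset nat}) x m : m \in x -> 0 < m <= 2 ^ k ->
  {in s, forall y, m \notin y} -> (chi k x \notin <<map (chi k) s>>)%VS.
Proof.
move=> mx m_bd s_m; apply/negP => x_span.
have m_lt : m.-1 < 2 ^ k by lia.
have := coord_span (X := in_tuple (map (chi k) s)) x_span.
move/(congr1 (fun v : 'rV['F_2]_(2 ^ k) => v ord0 (Ordinal m_lt))).
rewrite summxE !mxE /= prednK ?mx; last by lia.
rewrite big1 => [|i _]; first by move/eqP; rewrite oner_eq0.
have i_lt : i < size s by rewrite -(size_map (chi k)).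
rewrite !mxE (nth_map fset0) // mxE /= prednK; last by lia.
by rewrite (negbTE (s_m _ (mem_nth _ i_lt))) mulr0.
Qed.

Lemma free_chi_fmax k (s : seq {fset nat}) :
  {in s, forall x, fmax x \in x /\ 0 < fmax x <= 2 ^ k} -> uniq (map fmax s) ->
  free (map (chi k) s).
Proof.
pose ge_fmax : rel {fset nat} := fun x y => fmax y <= fmax x.
have ge_fmax_trans : transitive ge_fmax by move=> y x z; rewrite /ge_fmax; lia.
have s_perm : perm_eq (sort ge_fmax s) s by rewrite perm_sort.
move=> s_max; rewrite -(perm_free (perm_map (chi k) s_perm)).
rewrite -(perm_uniq (perm_map fmax s_perm)).
have : {in sort ge_fmax s, forall x, fmax x \in x /\ 0 < fmax x <= 2 ^ k}.
  by move=> x; rewrite (perm_mem s_perm); apply: s_max.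
have : sorted ge_fmax (sort ge_fmax s) by apply: sort_sorted => x y; apply: leq_total.
elim: (sort ge_fmax s) => [|x t IHt] t_sorted t_max; first by move=> _; apply: nil_free.
rewrite map_cons cons_uniq => /andP [x_new t_uniq].
have t_free : free (map (chi k) t).
  apply: IHt t_uniq; first exact: path_sorted t_sorted.
  by move=> y yt; apply: t_max; rewrite inE yt orbT.
have [x_max x_bd] := t_max x (mem_head x t).
rewrite map_cons free_cons t_free andbT; apply: (chi_notin_span x_max x_bd).
move=> y yt; apply/negP => /fmax_ub y_le.
have /allP /(_ y yt) x_le := order_path_min ge_fmax_trans t_sorted.
suff fmax_xy : fmax x = fmax y by move: x_new; rewrite fmax_xy map_f.
by apply/eqP; rewrite eqn_leq y_le; exact: x_le.
Qed.

Lemma free_chi_B k : free [seq chi k x | x <- enum_fset (B k)].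
Proof.
apply: free_chi_fmax => [x /mem_B [j [i [jk [i_bd ->]]]]|].
  rewrite fmax_pair ?leq_addl // !inE eqxx orbT; split=> //.
  have : 2 ^ j.+1 <= 2 ^ k by rewrite leq_exp2l.
  by rewrite expnS; lia.
rewrite map_inj_in_uniq ?fset_uniq // => x y.
move=> /mem_B [j [i [_ [i_bd ->]]]] /mem_B [j' [i' [_ [i'_bd ->]]]].
rewrite !fmax_pair ?leq_addl // => ji_eq.
have log_j : trunc_log 2 (2 ^ j + i) = j by apply: trunc_log_eq; rewrite // expnS; lia.
have log_j' : trunc_log 2 (2 ^ j' + i') = j' by apply: trunc_log_eq; rewrite // expnS; lia.
have jj' : j = j' by rewrite -log_j ji_eq log_j'.
by subst j'; have -> : i = i' by lia.
Qed.

Theorem mainTheorem4 (k : nat) (hk : 1 <= k) :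
  (forall x : {fset nat}, symspan (B k) x <-> symspan (C k) x)
  /\ #|` B k| = 2 ^ k - k - 1
  /\ #|` C k| = 2 ^ k - k - 1
  /\ free [seq chi k x | x <- enum_fset (B k)].
Proof.
split; last by rewrite card_B card_C free_chi_B.
move=> x; split => x_span.
  by apply/vclass_even_symspan_C/(symspan_vclass_even _ x_span)/B_vclass_even.
by apply/vclass_even_symspan_B/(symspan_vclass_even _ x_span)/C_vclass_even.
Qed.
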